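(* Let $n\ge 1$, let $x_1<x_2<\dots<x_n$ be real numbers and $m_1,\dots,m_n>0$, and define $s_k=\sum_{j=1}^n m_j x_j^k$ for $k=0,1,2,\dots$. Let $D_{n-1}=\det(s_{i+j})_{0\le i,j\le n-1}$. Let $p\ge 1$ be an integer and let $(a_{i,j})_{0\le i,j\le n+p}$ be a real $(n+p+1)\times(n+p+1)$ matrix such that $a_{i,j}=s_{i+j}$ whenever $i+j\le 2n+p-1$, while the entries with $i+j\ge 2n+p$ are arbitrary real numbers. Write $y_j=a_{n+j,\,n+p-j}$ for $j=0,1,\dots,p$ (these are exactly the entries with $i+j=2n+p$). Then $$\det(a_{i,j})_{0\le i,j\le n+p}=(-1)^{p(p+1)/2}\,D_{n-1}\prod_{j=0}^{p}\bigl(y_j-s_{2n+p}\bigr).$$ In particular, this determinant does not depend on the entries $a_{i,j}$ with $i+j\ge 2n+p+1$.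
   Context: Here $s_{2n+p}=\sum_{j=1}^n m_j x_j^{2n+p}$ is the moment of the discrete measure, not an entry of the matrix. *)

From mathcomp Require Import all_boot all_order all_algebra.
Set Implicit Arguments. Unset Strict Implicit. Unset Printing Implicit Defensive.
Import Order.TTheory GRing.Theory Num.Theory.
Local Open Scope ring_scope.

Definition moment (R : pzRingType) (n : nat) (m x : 'I_n -> R) (k : nat) : R :=
  \sum_(j < n) m j * x j ^+ k.

Definition hankel_det (R : comPzRingType) (n : nat) (m x : 'I_n -> R) : R :=
  \det (\matrix_(i < n, j < n) moment m x (i + j)%N).

From mathcomp Require Import all_boot all_order all_algebra.
From mathcomp Require Import ring zify.
Set Implicit Arguments. Unset Strict Implicit. Unset Printing Implicit Defensive.
Import Order.TTheory GRing.Theory Num.Theory.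
Local Open Scope ring_scope.

(* The moments satisfy the linear recurrence whose characteristic polynomial is
   P = prod_j (X - x_j), since s_{k+l} = sum_j m_j x_j^l x_j^k and P(x_j) = 0.
   Replacing column n + k by sum_t P_t col_{k+t} (a unitriangular column
   operation) kills every entry with i + j < 2n + p in the last p + 1 columns and
   turns the entries with i + j = 2n + p into y_j - s_{2n+p}.  The matrix becomes
   block lower triangular, with diagonal blocks the Hankel matrix of D_{n-1} and
   a lower anti-triangular matrix with anti-diagonal (y_j - s_{2n+p})_j. *)

Lemma det_lower_antitrig (R : comNzRingType) q (M : 'M[R]_q.+1) :
  (forall i j : 'I_q.+1, (i + j < q)%N -> M i j = 0) ->
  \det M = (-1) ^+ (q * q.+1 %/ 2) * \prod_(i < q.+1) M i (inord (q - i)).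
Proof.
elim: q M => [|q IH] M M0.
  by rewrite det_mx11 big_ord1 expr0 mul1r; congr (M _ _); apply: val_inj; rewrite /= inordK.
rewrite (expand_det_row _ ord0) (bigD1 ord_max) //= big1 ?addr0; last first.
  move=> j; rewrite -val_eqE /= => neq_j; rewrite M0 ?mul0r //= add0n.
  by have := ltn_ord j; lia.
rewrite /cofactor IH => [|i j ij_lt]; last first.
  by rewrite !mxE M0 //= /bump /=; have := ltn_ord j; lia.
have sign_rec : (q.+1 * q.+2 %/ 2 = q.+1 + q * q.+1 %/ 2)%N.
  by rewrite -divnMDl //; congr divn; lia.
have anti_diag : \prod_(i < q.+2) M i (inord (q.+1 - i)) =
    M ord0 ord_max * \prod_(i < q.+1) row' ord0 (col' ord_max M) i (inord (q - i)).
  rewrite big_ord_recl; congr (_ * _).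
    by congr (M _ _); apply: val_inj; rewrite /= inordK.
  apply: eq_bigr => i _; rewrite !mxE; congr (M _ _); apply: val_inj.
  by rewrite /= /bump /= !inordK; have := ltn_ord i; lia.
rewrite anti_diag sign_rec !exprD expr0 /=.
ring.
Qed.

Lemma det_block_lower (R : comNzRingType) n q (B : 'M[R]_((n + q).+1)) :
  (forall i j : 'I_(n + q).+1, (i < n <= j)%N -> B i j = 0) ->
  \det B = \det (\matrix_(i < n, j < n) B (inord i) (inord j)) *
           \det (\matrix_(a < q.+1, b < q.+1) B (inord (n + a)) (inord (n + b))).
Proof.
move=> B0; have e : (n + q).+1 = (n + q.+1)%N by rewrite addnS.
have -> : \det B = \det (castmx (e, e) B) by case: _ / e; rewrite castmx_id.
rewrite -[castmx _ _]submxK.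
have -> : ursubmx (castmx (e, e) B) = 0.
  apply/matrixP => i j; rewrite !mxE castmxE B0 //=.
  by rewrite ltn_ord leq_addr.
rewrite det_lblock; congr (_ * _); congr (\det _); apply/matrixP => i j;
  rewrite !mxE castmxE; congr (B _ _); apply: val_inj; rewrite /= inordK //;
  by have := ltn_ord i; have := ltn_ord j; lia.
Qed.

Lemma moment_annihilated (R : comNzRingType) n (m x : 'I_n -> R) (P : {poly R}) l :
  (forall j, root P (x j)) ->
  \sum_(t < size P) P`_t * moment m x (t + l) = 0.
Proof.
move=> Px0; rewrite /moment; under eq_bigr do rewrite big_distrr.
rewrite exchange_big big1 // => j _ /=.
transitivity (m j * x j ^+ l * P.[x j]); last by rewrite (rootP (Px0 j)) mulr0.
rewrite horner_coef big_distrr; apply: eq_bigr => t _ /=.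
by rewrite exprD mulrCA [x j ^+ t * _]mulrC !mulrA [_ * P`_t * _]mulrAC.
Qed.

Section PolyShift.

Variables (R : comNzRingType) (n : nat) (P : {poly R}).
Hypotheses (monP : P \is monic) (sizeP : size P = n.+1).

Let coef_deg : P`_n = 1.
Proof. by have := monicP monP; rewrite /lead_coef sizeP. Qed.

Definition polyshift_mx N : 'M[R]_N := \matrix_(k, j)
  if (n <= j)%N then ((j - n <= k)%N)%:R * P`_(k - (j - n)) else (k == j)%:R.

Lemma det_polyshift_mx N : \det (polyshift_mx N) = 1.
Proof.
rewrite -det_tr det_trig; last first.
  apply/is_trig_mxP => i j lt_ij; rewrite !mxE; case: ifP => le_n_i.
    by rewrite nth_default ?mulr0 // sizeP; lia.
  by rewrite (_ : (j == i) = false) //; apply/negbTE; rewrite -val_eqE /=; lia.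
apply: big1 => i _; rewrite !mxE; case: ifP => le_n_i; last by rewrite eqxx.
by rewrite leq_subr mul1r (_ : (i - (i - n) = n)%N) //; lia.
Qed.

Lemma mulmx_polyshift_lt N (A : 'M[R]_N.+1) (i j : 'I_N.+1) :
  (j < n)%N -> (A *m polyshift_mx N.+1) i j = A i j.
Proof.
move=> lt_jn; rewrite mxE (bigD1 j) //= big1 ?addr0 => [|k ne_kj].
  by rewrite mxE leqNgt lt_jn eqxx mulr1.
by rewrite mxE leqNgt lt_jn (negbTE ne_kj) mulr0.
Qed.

Lemma mulmx_polyshift_ge N (A : 'M[R]_N.+1) (i j : 'I_N.+1) :
  (n <= j)%N ->
  (A *m polyshift_mx N.+1) i j = \sum_(t < n.+1) P`_t * A i (inord (j - n + t)).
Proof.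
move=> le_nj; rewrite mxE; under eq_bigr do rewrite mxE le_nj.
set b := (j - n)%N.
have le_bn : (b + n.+1 <= N.+1)%N by have := ltn_ord j; rewrite /b; lia.
pose F k := A i (inord k) * ((b <= k)%:R * P`_(k - b)).
rewrite (eq_bigr (F \o val)) => [|k _]; last by rewrite /F /= inord_val.
rewrite -(big_mkord xpredT F) (@big_cat_nat _ _ _ b) //=; last by lia.
rewrite big_nat_cond big1 ?add0r => [|k /andP[/andP[_ lt_kb] _]]; last first.
  by rewrite /F leqNgt lt_kb mul0r mulr0.
rewrite -{1}[b]add0n big_addn (@big_cat_nat _ _ _ n.+1) //=; last by lia.
rewrite [X in _ + X]big_nat_cond [X in _ + X]big1 ?addr0 => [|k /andP[/andP[le_nk _] _]].
  rewrite big_mkord; apply: eq_bigr => t _.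
  by rewrite /F leq_addl mul1r addnK mulrC addnC.
by rewrite /F nth_default ?mulr0 ?mul0r // sizeP; lia.
Qed.

Variable s : nat -> R.
Hypothesis Ps0 : forall l, \sum_(t < size P) P`_t * s (t + l)%N = 0.

Lemma mulmx_polyshift_hankel N L (A : 'M[R]_N.+1) (i j : 'I_N.+1) :
  (forall i j : 'I_N.+1, (i + j < L)%N -> A i j = s (i + j)%N) ->
  (n <= j)%N -> (i + j <= L)%N ->
  (A *m polyshift_mx N.+1) i j = A i j - s (i + j)%N.
Proof.
move=> hankelA le_nj le_ijL; rewrite mulmx_polyshift_ge // big_ord_recr /=.
have := Ps0 (i + j - n)%N; rewrite sizeP big_ord_recr /= coef_deg !mul1r.
have -> : (n + (i + j - n) = i + j)%N by lia.
have -> : (inord (j - n + n) : 'I_N.+1) = j.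
  by apply: val_inj; rewrite /= subnK ?inordK.
move/eqP; rewrite addr_eq0 => /eqP <-; rewrite addrC; congr (_ + _).
apply: eq_bigr => t _; have := ltn_ord t; have := ltn_ord j => lt_jN lt_tn.
rewrite hankelA /= inordK; try lia.
by congr (_ * s _); lia.
Qed.

Lemma det_hankel_recurrent p (A : 'M[R]_((n + p).+1)) :
  (forall i j : 'I_(n + p).+1, (i + j < 2 * n + p)%N -> A i j = s (i + j)%N) ->
  \det A = (-1) ^+ (p * p.+1 %/ 2) * \det (\matrix_(i < n, j < n) s (i + j)%N) *
    \prod_(j < p.+1) (A (inord (n + j)) (inord (n + p - j)) - s (2 * n + p)%N).
Proof.
move=> hankelA; set B := A *m polyshift_mx (n + p).+1.
have BE (i j : 'I_(n + p).+1) :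
    (n <= j)%N -> (i + j <= 2 * n + p)%N -> B i j = A i j - s (i + j)%N.
  exact: mulmx_polyshift_hankel.
have -> : \det A = \det B by rewrite det_mulmx det_polyshift_mx mulr1.
rewrite det_block_lower => [|i j /andP[lt_in le_nj]]; last first.
  by rewrite BE ?hankelA ?subrr //; have := ltn_ord j; lia.
have -> : \matrix_(i < n, j < n) B (inord i) (inord j) = \matrix_(i, j) s (i + j)%N.
  apply/matrixP => i j; rewrite [LHS]mxE [RHS]mxE mulmx_polyshift_lt ?hankelA !inordK //;
  by have := ltn_ord i; have := ltn_ord j; lia.
rewrite det_lower_antitrig => [|a b lt_ab]; last first.
  rewrite mxE BE ?hankelA ?subrr // !inordK //;
  by have := ltn_ord a; have := ltn_ord b; lia.
rewrite mulrCA mulrA; congr (_ * _); apply: eq_bigr => a _.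
have := ltn_ord a => lt_ap; rewrite mxE inordK ?addnBA; try lia.
rewrite BE !inordK; try lia.
by congr (_ - s _); lia.
Qed.

End PolyShift.

Theorem lemma2p3 (R : realFieldType) (n p : nat) (x m : 'I_n -> R)
  (A : 'M[R]_((n + p).+1))
  (hn : (1 <= n)%N) (hp : (1 <= p)%N)
  (hx : forall i j : 'I_n, (i < j)%N -> x i < x j)
  (hm : forall j : 'I_n, 0 < m j)
  (hA : forall i j : 'I_(n + p).+1,
          (i + j <= (2 * n + p).-1)%N -> A i j = moment m x (i + j)%N) :
  \det A =
    (-1) ^+ (p * p.+1 %/ 2) * hankel_det m x *
    \prod_(j < p.+1)
      (A (inord (n + j)) (inord (n + p - j)) - moment m x (2 * n + p)%N).
Proof.
set P := \prod_(j < n) ('X - (x j)%:P).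
have monP : P \is monic by apply: monic_prod_XsubC.
have sizeP : size P = n.+1 by rewrite size_prod_XsubC /index_enum -enumT size_enum_ord.
have Ps0 l : \sum_(t < size P) P`_t * moment m x (t + l) = 0.
  apply: moment_annihilated => j.
  by rewrite /root horner_prod (bigD1 j) //= hornerXsubC subrr mul0r.
apply: (det_hankel_recurrent monP sizeP Ps0) => i j lt_ij.
by apply: hA; lia.
Qed.
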